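(* Let $q$ be a prime power, let $b\in\mathbb{F}_q[x]$ be a permutation polynomial of $\mathbb{F}_q$, let $n$ be a positive integer, and let $h, k\in\mathbb{F}_q[x]$ be such that $\gcd\left(h(x),\frac{x^n-1}{x-1}\right)=1$ and $k(\mathbb{F}_q)\subseteq\mathbb{F}_q^*$. Then for every polynomial $f\in\mathbb{F}_{q^n}[x]$ with $T_n[f](x)\equiv b(x)-h(1)\cdot k(x)\cdot x\pmod{x^q-x}$, the polynomial $$\mathcal{P}_{b,f,h,k,n}(x)=f(\mathrm{Tr}_{q^n/q}(x))+k(\mathrm{Tr}_{q^n/q}(x))\cdot L_h(x)$$ is a permutation polynomial of $\mathbb{F}_{q^n}$.
   Context: For $u(x)=\sum_{i=0}^m a_i x^i\in\mathbb{F}_q[x]$, its linearized $q$-associate is $L_u(x)=\sum_{i=0}^m a_i x^{q^i}$. $\mathrm{Tr}_{q^n/q}(x)=x+x^q+\cdots+x^{q^{n-1}}$. For $f(x)=\sum_{i=0}^d a_i x^i\in\mathbb{F}_{q^n}[x]$, $T_n[f](x)=\sum_{i=0}^d\mathrm{Tr}_{q^n/q}(a_i)x^i\in\mathbb{F}_q[x]$. A permutation polynomial of a finite field is a polynomial inducing a bijection of it. *)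

From HB Require Import structures.
From mathcomp Require Import all_boot all_algebra all_field.
Set Implicit Arguments. Unset Strict Implicit. Unset Printing Implicit Defensive.
Import GRing.Theory.
Local Open Scope ring_scope.

Definition trq (L : fieldType) (q n : nat) (x : L) : L :=
  \sum_(i < n) x ^+ (q ^ i).

(* T_n[f] : apply the trace coefficientwise (result viewed in the big field) *)
Definition Tn (L : fieldType) (q n : nat) (f : {poly L}) : {poly L} :=
  \poly_(i < size f) trq q n f`_i.

Definition linq (L : fieldType) (q : nat) (u : {poly L}) (x : L) : L :=
  \sum_(i < size u) u`_i * x ^+ (q ^ i).

(* Tr is itself a linearized associate, Tr = L_Phi with Phi = (x^n - 1)/(x - 1),
   and linearized associates of polynomials over F_q compose like products:
   L_(v u) = L_v o L_u.  Hence Tr (L_h x) = L_h (Tr x) = h(1) Tr x, and the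
   congruence on T_n[f] turns this into Tr (P x) = b (Tr x).  If P x = P y, then
   Tr x = Tr y since b permutes F_q, so L_h (x - y) = 0 because k has no root in
   F_q; also L_Phi (x - y) = Tr (x - y) = 0, and a Bezout relation
   u h + v Phi = 1 gives x - y = L_1 (x - y) = 0. *)

From mathcomp Require Import all_boot all_algebra all_field.
Set Implicit Arguments.
Unset Strict Implicit.
Unset Printing Implicit Defensive.
Import GRing.Theory.
Local Open Scope ring_scope.

Lemma expr_expn_fixed (R : pzSemiRingType) (x : R) m j :
  x ^+ m = x -> x ^+ (m ^ j) = x.
Proof.
move=> xm; elim: j => [|j IHj]; first by rewrite expn0 expr1.
by rewrite expnSr exprM IHj xm.
Qed.

Lemma divp_Xn_sub1 (K : fieldType) n :
  ('X^n - 1) %/ ('X - 1) = \sum_(i < n) 'X^i :> {poly K}.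
Proof. by rewrite subrX1 mulrC mulpK // -[1]/(1%:P) polyXsubC_eq0. Qed.

Lemma horner_modp_root (K : fieldType) (p m : {poly K}) c :
  root m c -> (p %% m).[c] = p.[c].
Proof. by move/eqP=> mc0; rewrite [in RHS](divp_eq p m) !hornerE mc0 mulr0 add0r. Qed.

Section Linearized.
Variables (L : fieldType) (q : nat).

Lemma linq_widen N (u : {poly L}) x : (size u <= N)%N ->
  linq q u x = \sum_(i < N) u`_i * x ^+ (q ^ i).
Proof.
move=> le_uN; rewrite /linq (big_ord_widen N (fun i => u`_i * x ^+ (q ^ i))) //.
rewrite big_mkcond; apply: eq_bigr => i _; case: ltnP => // le_u_i.
by rewrite nth_default // mul0r.
Qed.

Lemma linq0 (x : L) : linq q 0 x = 0.
Proof. by rewrite /linq size_poly0 big_ord0. Qed.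

Lemma linqD (u v : {poly L}) x : linq q (u + v) x = linq q u x + linq q v x.
Proof.
pose N := maxn (size u) (size v).
rewrite !(@linq_widen N) ?leq_maxl ?leq_maxr ?(leq_trans (size_polyD _ _)) //.
by rewrite -big_split; apply: eq_bigr => i _; rewrite coefD mulrDl.
Qed.

Lemma linqZ c (u : {poly L}) x : linq q (c *: u) x = c * linq q u x.
Proof.
rewrite (@linq_widen (size u)) ?size_scale_leq // mulr_sumr.
by apply: eq_bigr => i _; rewrite coefZ mulrA.
Qed.

Lemma linqC (c x : L) : linq q c%:P x = c * x.
Proof.
by rewrite (@linq_widen 1) ?size_polyC ?leq_b1 // big_ord1 coefC expn0 expr1.
Qed.

Lemma linqXn i (x : L) : linq q 'X^i x = x ^+ (q ^ i).
Proof.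
rewrite (@linq_widen i.+1) ?size_polyXn // big_ord_recr /= big1 => [|j _].
  by rewrite coefXn eqxx mul1r add0r.
by rewrite coefXn ltn_eqF ?mul0r.
Qed.

Hypothesis q_pchar : [pchar L].-nat q.

Lemma exprD_pchar_pow j (x y : L) :
  (x + y) ^+ (q ^ j) = x ^+ (q ^ j) + y ^+ (q ^ j).
Proof. by apply: exprDn_pchar; rewrite pnatX q_pchar. Qed.

Lemma expr0_pchar_pow j : (0 : L) ^+ (q ^ j) = 0.
Proof. by rewrite expr0n expn_eq0; case/andP: q_pchar => /lt0n_neq0/negPf->. Qed.

Lemma expr_sum_pchar_pow j I (r : seq I) (P : pred I) (G : I -> L) :
  (\sum_(i <- r | P i) G i) ^+ (q ^ j) = \sum_(i <- r | P i) G i ^+ (q ^ j).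
Proof. exact: (big_morph _ (exprD_pchar_pow j) (expr0_pchar_pow j)). Qed.

Lemma linqDr (u : {poly L}) x y : linq q u (x + y) = linq q u x + linq q u y.
Proof.
by rewrite /linq -big_split; apply: eq_bigr => i _; rewrite exprD_pchar_pow mulrDr.
Qed.

Lemma linq0r (u : {poly L}) : linq q u 0 = 0.
Proof. by rewrite /linq big1 // => i _; rewrite expr0_pchar_pow mulr0. Qed.

Lemma linqBr (u : {poly L}) x y : linq q u (x - y) = linq q u x - linq q u y.
Proof. by rewrite -[in RHS](subrK y x) (linqDr u (x - y)) addrK. Qed.

Lemma linq_scaler (u : {poly L}) c x :
  c ^+ q = c -> linq q u (c * x) = c * linq q u x.
Proof.
move=> cq; rewrite /linq mulr_sumr; apply: eq_bigr => i _.
by rewrite exprMn expr_expn_fixed // mulrCA.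
Qed.

Lemma linq_mulX (u : {poly L}) x : (forall i, u`_i ^+ q = u`_i) ->
  linq q (u * 'X) x = linq q u x ^+ q.
Proof.
move=> uq; rewrite (@linq_widen (size u).+1); last first.
  by rewrite (leq_trans (size_polyMleq _ _)) // size_polyX addn2.
rewrite big_ord_recl coefMX eqxx mul0r add0r -[q in RHS]expn1.
rewrite expr_sum_pchar_pow; apply: eq_bigr => i _.
by rewrite coefMX /= expn1 exprMn uq -exprM expnSr.
Qed.

End Linearized.

Section FiniteSubfield.
Variables (F : finFieldType) (L : fieldType) (iota : {rmorphism F -> L}).
Local Notation q := #|F|.
Local Notation Lq u := (linq q (map_poly iota u)).

Lemma card_pchar_nat : [pchar L].-nat q.
Proof.
have [p p_pr pFp] := finPcharP F.
have -> : q = (p ^ logn p #|pPrimeCharType pFp|)%N := card_pprimeChar pFp.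
by rewrite pnatX pnatE // (fmorph_pchar iota) pFp.
Qed.

Lemma rmorph_expf_card (a : F) : iota a ^+ q = iota a.
Proof. by rewrite -rmorphXn expf_card. Qed.

Lemma fixed_in_rmorph_image (c : L) : c ^+ q = c -> exists a, c = iota a.
Proof.
move=> cq; have := congr1 (map_poly iota) (finField_genPoly F).
rewrite rmorphB /= map_polyXn map_polyX rmorph_prod /= => genPolyL.
have : root ('X^q - 'X) c by rewrite rootE !hornerE cq subrr.
rewrite genPolyL rootE horner_prod => /prodf_eq0 [a _].
by rewrite map_polyXsubC !hornerE subr_eq0 => /eqP ->; exists a.
Qed.

Lemma coef_map_expf_card (u : {poly F}) i :
  (map_poly iota u)`_i ^+ q = (map_poly iota u)`_i.
Proof. by rewrite coef_map rmorph_expf_card. Qed.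

Lemma linq_map_mul (u v : {poly F}) x : Lq (v * u) x = Lq v (Lq u x).
Proof.
elim/poly_ind: v => [|v c IHv]; first by rewrite mul0r !rmorph0 !linq0.
rewrite mulrDl mulrAC mul_polyC !rmorphD /= map_polyZ !(rmorphM _ _ 'X) /=.
rewrite map_polyX map_polyC /= !linqD linqZ linqC.
by rewrite !linq_mulX ?card_pchar_nat ?IHv // => i; apply: coef_map_expf_card.
Qed.

Lemma linq_map_fixed (u : {poly F}) c : c ^+ q = c -> Lq u c = iota u.[1] * c.
Proof.
move=> cq; rewrite /linq size_map_poly horner_coef rmorph_sum mulr_suml.
apply: eq_bigr => i _.
by rewrite coef_map expr_expn_fixed // expr1n mulr1.
Qed.

Lemma linq_map_coprime_eq0 (u v : {poly F}) z :
  coprimep u v -> Lq u z = 0 -> Lq v z = 0 -> z = 0.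
Proof.
move=> /Bezout_coprimepP [[s t] /= /eqpf_eq [c c_neq0 bezout]] uz0 vz0.
have : Lq (s * u + t * v) z = 0.
  by rewrite rmorphD linqD !linq_map_mul uz0 vz0 !linq0r ?card_pchar_nat // addr0.
rewrite bezout alg_polyC map_polyC linqC => /eqP.
by rewrite mulf_eq0 fmorph_eq0 (negbTE c_neq0) => /eqP.
Qed.

Variable n : nat.
Local Notation Tr := (@trq L q n).

Lemma trq_linq x : Tr x = Lq (\sum_(i < n) 'X^i) x.
Proof.
rewrite rmorph_sum.
rewrite (big_morph (fun p => linq q p x) (fun p r => linqD q p r x) (linq0 q x)).
by apply: eq_bigr => i _; rewrite /= map_polyXn linqXn.
Qed.

Lemma trq0 : Tr 0 = 0.
Proof. by rewrite trq_linq linq0r ?card_pchar_nat. Qed.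

Lemma trqD x y : Tr (x + y) = Tr x + Tr y.
Proof. by rewrite !trq_linq linqDr ?card_pchar_nat. Qed.

Lemma trqB x y : Tr (x - y) = Tr x - Tr y.
Proof. by rewrite !trq_linq linqBr ?card_pchar_nat. Qed.

Lemma trq_scale c x : c ^+ q = c -> Tr (c * x) = c * Tr x.
Proof. by move=> cq; rewrite !trq_linq linq_scaler ?card_pchar_nat. Qed.

Lemma hornerTn (f : {poly L}) c : c ^+ q = c -> (Tn q n f).[c] = Tr f.[c].
Proof.
move=> cq; rewrite /Tn horner_poly horner_coef (big_morph _ trqD trq0).
apply: eq_bigr => i _; rewrite [in RHS]mulrC trq_scale; first exact: mulrC.
by rewrite exprAC cq.
Qed.

Hypothesis frob_n : forall x : L, x ^+ (q ^ n) = x.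

Lemma trq_fixed x : Tr x ^+ q = Tr x.
Proof.
rewrite /trq -[q in _ ^+ q]expn1 expr_sum_pchar_pow ?card_pchar_nat // expn1.
case: n frob_n => [|m frob_m]; first by rewrite !big_ord0.
rewrite big_ord_recr big_ord_recl /= -exprM -expnSr frob_m expn0 expr1 addrC.
by congr (_ + _); apply: eq_bigr => i _; rewrite -exprM -expnSr.
Qed.

Lemma trq_linq_map (u : {poly F}) x : Tr (Lq u x) = iota u.[1] * Tr x.
Proof.
rewrite trq_linq -linq_map_mul (mulrC _ u) linq_map_mul -trq_linq.
by rewrite linq_map_fixed ?trq_fixed.
Qed.

Variables (b h k : {poly F}) (f : {poly L}).
Hypothesis Tn_f : Tn q n f %% ('X^q - 'X)
  = map_poly iota (b - h.[1] *: (k * 'X)) %% ('X^q - 'X).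

Definition calP x := f.[Tr x] + (map_poly iota k).[Tr x] * Lq h x.

Lemma trq_calP x a : Tr x = iota a -> Tr (calP x) = iota b.[a].
Proof.
move=> Trx; rewrite /calP Trx trqD horner_map trq_scale ?rmorph_expf_card //.
rewrite trq_linq_map Trx -hornerTn ?rmorph_expf_card //.
have Xq_root : root ('X^q - 'X) (iota a) by rewrite rootE !hornerE rmorph_expf_card subrr.
rewrite -(horner_modp_root _ Xq_root) Tn_f horner_modp_root // horner_map /= !hornerE.
by rewrite !rmorphB !rmorphM /= [iota k.[a] * _]mulrC subrK.
Qed.

Lemma calP_inj : bijective (fun a : F => b.[a]) -> coprimep h (\sum_(i < n) 'X^i) ->
  (forall a : F, k.[a] != 0) -> injective calP.
Proof.
move=> bij_b cop k_neq0 x y Pxy.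
have [a Trx] := fixed_in_rmorph_image (trq_fixed x).
have [a' Try] := fixed_in_rmorph_image (trq_fixed y).
have a'a : a' = a.
  by apply/(bij_inj bij_b)/(fmorph_inj iota); rewrite -(trq_calP Trx) -(trq_calP Try) Pxy.
have Tr_xy : Tr (x - y) = 0 by rewrite trqB Trx Try a'a subrr.
have Lh_xy : Lq h (x - y) = 0.
  move: Pxy; rewrite /calP Trx Try a'a horner_map => /addrI /mulfI.
  rewrite fmorph_eq0 k_neq0 => /(_ isT) Lhxy.
  by rewrite linqBr ?card_pchar_nat // Lhxy subrr.
by apply/eqP; rewrite -subr_eq0; apply/eqP/(linq_map_coprime_eq0 cop Lh_xy); rewrite -trq_linq.
Qed.

End FiniteSubfield.

Theorem theorem3p5 (F L : finFieldType) (iota : {rmorphism F -> L}) (n : nat)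
    (b h k : {poly F}) (f : {poly L}) :
  (0 < n)%N ->
  #|L| = (#|F| ^ n)%N ->
  bijective (fun a : F => b.[a]) ->
  coprimep h (('X^n - 1) %/ ('X - 1)) ->
  (forall a : F, k.[a] != 0) ->
  Tn #|F| n f %% ('X^#|F| - 'X)
    = map_poly iota (b - h.[1] *: (k * 'X)) %% ('X^#|F| - 'X) ->
  bijective (fun x : L =>
    f.[trq #|F| n x] + (map_poly iota k).[trq #|F| n x] * linq #|F| (map_poly iota h) x).
Proof.
(* [0 < n] is implied by [#|L| = #|F| ^ n], as a field has at least two elements. *)
move=> _ cardL bij_b cop k_neq0 Tn_f.
have frob_n (x : L) : x ^+ (#|F| ^ n) = x by rewrite -cardL expf_card.
rewrite divp_Xn_sub1 in cop.
by apply: injF_bij; apply: (calP_inj frob_n Tn_f bij_b cop k_neq0).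
Qed.
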